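(* Let $M$ be an $n\times n$ complex Hadamard matrix, let $\Gamma$ be the group of all $n\times n$ complex monomial matrices $P$ with $PMP^\ast=M$, let $\pi\colon\Gamma\to\mathrm{Sym}_n$ send a monomial matrix to its underlying permutation, let $G=\pi(\Gamma)$, assume $G$ is transitive, and let $\Gamma_{\rm f}=\{L\in\Gamma:\det(L)=1\}$. Suppose that $G$ and $\Gamma_{\rm f}$ are perfect. Let $\hat{G}$ be a Schur cover of $G$, let $H\leq G$ be a point stabiliser, and let $\hat{H}\leq\hat{G}$ be the full preimage of $H$ under the projection $\hat{G}\to G$. Then $\Gamma_{\rm f}=\rho(\hat{G})$ for some representation $\rho$ of $\hat{G}$ induced from a linear character of $\hat{H}$. *)

From HB Require Import structures.
From mathcomp Require Import all_boot all_order all_algebra all_fingroup all_solvable all_field all_character.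
Set Implicit Arguments. Unset Strict Implicit. Unset Printing Implicit Defensive.
Import GroupScope GRing.Theory Num.Theory.
Local Open Scope ring_scope.

Definition ctrmx n (M : 'M[algC]_n) : 'M[algC]_n := (map_mx Num.conj M)^T.

Definition complex_hadamard n (M : 'M[algC]_n) : Prop :=
  (forall i j, `|M i j| = 1) /\ M *m ctrmx M = n%:R%:M.

Definition monomial n (P : 'M[algC]_n) : bool :=
  [forall i, #|[pred j | P i j != 0]| == 1%N] &&
  [forall j, #|[pred i | P i j != 0]| == 1%N].

Definition Gamma n (M : 'M[algC]_n) (P : 'M[algC]_n) : Prop :=
  monomial P /\ P *m M *m ctrmx P = M.

Definition Gamma_f n (M : 'M[algC]_n) (L : 'M[algC]_n) : Prop :=
  Gamma M L /\ \det L = 1.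

(* the underlying permutation of a monomial matrix P is s, i.e. the nonzero
   entry of row i lies in column s i (row-vector convention, so that
   P |-> its permutation is a homomorphism for mathcomp's perm product) *)
Definition underlying_perm n (P : 'M[algC]_n) (s : {perm 'I_n}) : Prop :=
  forall i, P i (s i) != 0.

Definition mxcomm n (A B : 'M[algC]_n) : 'M[algC]_n :=
  invmx A *m invmx B *m A *m B.

(* a (finite) group S of matrices is perfect: it equals its derived subgroup,
   i.e. every element is a finite product of commutators of elements of S
   (the subgroup generated by commutators consists of such products, as the
   inverse of a commutator is a commutator) *)
Definition perfect_mx n (S : 'M[algC]_n -> Prop) : Prop :=
  forall L, S L -> exists s : seq ('M[algC]_n * 'M[algC]_n),
    (forall p, p \in s -> S p.1 /\ S p.2) /\
    L = foldr (fun p acc => mxcomm p.1 p.2 *m acc) 1%:M s.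

Definition perfect_group (gT : finGroupType) (G : {set gT}) : Prop :=
  (G^`(1))%g = G.

Definition stem_extension (gT rT : finGroupType) (Gh : {group gT})
    (phi : {morphism Gh >-> rT}) (G : {set rT}) : Prop :=
  (phi @* Gh)%g = G /\ ('ker phi \subset 'Z(Gh) :&: Gh^`(1))%g.

Definition schur_cover (gT rT : finGroupType) (Gh : {group gT})
    (phi : {morphism Gh >-> rT}) (G : {set rT}) : Prop :=
  stem_extension phi G /\
  forall (kT : finGroupType) (K : {group kT}) (psi : {morphism K >-> rT}),
    stem_extension psi G -> (#|K| <= #|Gh|)%N.

Definition left_transversal (gT : finGroupType) n (Gh Hh : {set gT})
    (t : 'I_n -> gT) : Prop :=
  (forall i, t i \in Gh) /\
  (forall i j, ((t i)^-1 * t j)%g \in Hh -> i = j) /\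
  (forall g, g \in Gh -> exists i, ((t i)^-1 * g)%g \in Hh).

(* the matrix of the representation induced from the class function lam
   of Hh (zero outside Hh), with respect to the transversal t *)
Definition induced_mx (gT : finGroupType) n (Hh : {group gT})
    (lam : 'CF(Hh)) (t : 'I_n -> gT) (g : gT) : 'M[algC]_n :=
  \matrix_(i, j) lam ((t i)^-1 * g * t j)%g.

Definition induced_from_linear_char (gT : finGroupType) n (Gh Hh : {group gT})
    (rho : mx_representation algC Gh n) : Prop :=
  exists (lam : 'CF(Hh)) (t : 'I_n -> gT) (A : 'M[algC]_n),
    lam \is a linear_char /\ left_transversal Gh Hh t /\ A \in unitmx /\
    forall g, g \in Gh -> rho g = invmx A *m induced_mx lam t g *m A.

(* Two elements of Gamma with the same underlying permutation differ by a
   scalar, so Gamma_f is finite (the scalars are n-th roots of unity) and its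
   right regular action turns it into a permutation group S.  Sending a matrix
   to its permutation maps S onto G (rescale by an n-th root of the
   determinant) with scalar, hence central, kernel.  The pullback E of the
   Schur cover Gh -> G along S -> G is then a central extension of the perfect
   group G, so E' is a stem extension of G; maximality of the Schur cover makes
   the projection E' -> Gh an isomorphism, whence a morphism rho : Gh -> S over
   G, onto because S is perfect.  Finally, a representation by monomial
   matrices with transitive permutation action is conjugate, by the diagonal
   matrix read off a transversal of the point stabiliser, to the
   representation induced from the linear character h |-> rho(h)_xx. *)

From HB Require Import structures.
From mathcomp Require Import all_boot all_order all_algebra all_fingroup all_solvable all_field all_character.
From mathcomp Require Import ring.
From Stdlib Require Import Classical_Prop.
Import GroupScope GRing.Theory Num.Theory.
Set Implicit Arguments. Unset Strict Implicit. Unset Printing Implicit Defensive.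

Section CentralExtension.

Variables (gT rT : finGroupType).
Implicit Types (E K : {group gT}) (G : {group rT}).

Lemma perfect_der1_central_mul E K :
  K \subset 'Z(E) -> E \subset K * E^`(1) -> perfect_group E^`(1).
Proof.
move=> sKZ sEKE'; have cKE : K \subset 'C(E) := subset_trans sKZ (subsetIr _ _).
have cE'K : E^`(1) \subset 'C(K) by rewrite centsC (subset_trans cKE) ?centS ?der_sub.
have defE : K \* E^`(1) = E.
  rewrite cprodE //; apply/eqP; rewrite eqEsubset sEKE' mul_subG ?der_sub //.
  exact: subset_trans sKZ (subsetIl _ _).
have /derG1P K'1 : abelian K by apply: abelianS sKZ (center_abelian E).
by rewrite /perfect_group -[RHS](der_cprod 1 defE) K'1 cprod1g.
Qed.

Lemma perfect_stem_extension (Gh : {group gT}) (phi : {morphism Gh >-> rT}) G :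
  stem_extension phi G -> perfect_group G -> perfect_group Gh.
Proof.
case=> imGh /subsetIP[_ sKGh'] perfG; apply/eqP; rewrite eqEsubset der_sub /=.
have : Gh \subset phi @*^-1 (phi @* Gh^`(1)).
  by rewrite morphim_der // imGh perfG -imGh -sub_morphim_pre.
by rewrite morphimK ?der_sub // => /subset_trans-> //; rewrite mul_subG.
Qed.

Lemma central_extension_der_stem E (psi : {morphism E >-> rT}) G :
  psi @* E = G -> perfect_group G -> 'ker psi \subset 'Z(E) ->
  stem_extension (restrm (der_sub 1 E) psi) G.
Proof.
move=> imE perfG sKZ.
have imE' : psi @* E^`(1) = G by rewrite morphim_der // imE perfG.
have perfE' : perfect_group E^`(1).
  apply: perfect_der1_central_mul sKZ _.
  by rewrite -morphimK ?der_sub // imE' -imE -sub_morphim_pre.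
split; first by rewrite morphim_restrm setIid.
rewrite ker_restrm perfE' subsetI subsetIl andbT /center setIS //.
by rewrite (subset_trans sKZ) // (subset_trans (subsetIr _ _)) // centS ?der_sub.
Qed.

End CentralExtension.

Lemma schur_cover_der_injm (gT kT rT : finGroupType) (Gh : {group gT})
    (phi : {morphism Gh >-> rT}) (G : {group rT}) (E : {group kT})
    (f : {morphism E >-> gT}) (psi : {morphism E >-> rT}) :
  schur_cover phi G -> perfect_group G ->
  f @* E = Gh -> psi @* E = G -> 'ker psi \subset 'Z(E) ->
  'injm (restrm (der_sub 1 E) f) /\ restrm (der_sub 1 E) f @* E^`(1) = Gh.
Proof.
move=> [stemGh maxGh] perfG imfE impsiE sKZ.
have imE' : restrm (der_sub 1 E) f @* E^`(1) = Gh.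
  rewrite morphim_restrm setIid morphim_der // imfE.
  exact: perfect_stem_extension stemGh perfG.
split=> //; rewrite -card_im_injm imE' eqn_leq -{1}imE' leq_morphim /=.
exact: maxGh (central_extension_der_stem impsiE perfG sKZ).
Qed.

Section Pullback.

Variables (aT bT rT : finGroupType) (A : {group aT}) (B : {group bT}).
Variables (f : {morphism A >-> rT}) (g : {morphism B >-> rT}).

Definition pullback : {set aT * bT} :=
  [set u | [&& u.1 \in A, u.2 \in B & f u.1 == g u.2]].

Lemma pullbackE u : (u \in pullback) = [&& u.1 \in A, u.2 \in B & f u.1 == g u.2].
Proof. by rewrite inE. Qed.

Lemma pullback_group_set : group_set pullback.
Proof.
apply/group_setP; split.
  by rewrite pullbackE (group1 A) (group1 B); apply/eqP; rewrite [f _]morph1 [g _]morph1.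
move=> [a b] [a2 b2]; rewrite !pullbackE => /and3P[Aa Bb /eqP fg] /and3P[Aa2 Bb2 /eqP fg2].
by rewrite !groupM // !morphM // fg fg2 eqxx.
Qed.

Canonical pullback_group := Group pullback_group_set.

Lemma pullback_fst : f @* A \subset g @* B -> fst @* pullback = A.
Proof.
move=> sfg; apply/eqP; rewrite eqEsubset; apply/andP; split.
  by apply/subsetP=> _ /morphimP[u _ + ->]; rewrite pullbackE => /and3P[].
apply/subsetP=> a Aa; have /morphimP[b _ Bb fab] := subsetP sfg _ (mem_morphim f Aa Aa).
by apply/morphimP; exists (a, b); rewrite ?inE ?pullbackE //= Aa Bb fab eqxx.
Qed.

Lemma pullback_snd : g @* B \subset f @* A -> snd @* pullback = B.
Proof.
move=> sgf; apply/eqP; rewrite eqEsubset; apply/andP; split.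
  by apply/subsetP=> _ /morphimP[u _ + ->]; rewrite pullbackE => /and3P[].
apply/subsetP=> b Bb; have /morphimP[a _ Aa fab] := subsetP sgf _ (mem_morphim g Bb Bb).
by apply/morphimP; exists (a, b); rewrite ?inE ?pullbackE //= Aa Bb fab eqxx.
Qed.

Lemma pullback_morphM : {in pullback &, {morph (fun u => f u.1) : u v / u * v}}.
Proof. by move=> u v; rewrite !pullbackE => /and3P[Au _ _] /and3P[Av _ _]; apply: morphM. Qed.

Canonical pullback_morphism := Morphism pullback_morphM.

Lemma pullback_morphim : f @* A \subset g @* B -> pullback_morphism @* pullback = f @* A.
Proof.
move=> sfg; apply/eqP; rewrite eqEsubset; apply/andP; split; apply/subsetP.
  by move=> _ /morphimP[u _ + ->]; rewrite pullbackE => /and3P[Au _ _]; apply: mem_morphim.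
move=> _ /morphimP[a _ Aa ->]; have := Aa; rewrite -{1}(pullback_fst sfg).
by case/morphimP=> u _ Eu ->; apply: mem_morphim.
Qed.

Lemma ker_pullback_center :
  'ker f \subset 'Z(A) -> 'ker g \subset 'Z(B) ->
  'ker pullback_morphism \subset 'Z(pullback).
Proof.
move=> sKfZ sKgZ; apply/subsetP=> u /morphpreP[Eu /set1P fu1].
have := Eu; rewrite pullbackE => /and3P[Au Bu /eqP fgu].
have /setIP[_ cAu1] : u.1 \in 'Z(A) by apply: (subsetP sKfZ); apply/(kerP f Au).
have /setIP[_ cBu2] : u.2 \in 'Z(B) by apply: (subsetP sKgZ); apply/(kerP g Bu); rewrite -fgu.
rewrite inE Eu; apply/centP=> v; rewrite pullbackE => /and3P[Av Bv _].
by congr (_, _); [apply: (centP cAu1) | apply: (centP cBu2)].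
Qed.

End Pullback.

Lemma schur_cover_lift (gT kT rT : finGroupType) (Gh : {group gT}) (S : {group kT})
    (G : {group rT}) (phi : {morphism Gh >-> rT}) (psi : {morphism S >-> rT}) :
  schur_cover phi G -> perfect_group G -> perfect_group S ->
  psi @* S = G -> 'ker psi \subset 'Z(S) ->
  exists rho : {morphism Gh >-> kT},
    rho @* Gh = S /\ {in Gh, forall g, psi (rho g) = phi g}.
Proof.
move=> cover perfG perfS imS kerS; have [[imGh /subsetIP[kerGh _]] _] := cover.
pose E := pullback_group phi psi.
have sphipsi : phi @* Gh \subset psi @* S by rewrite imGh imS.
have spsiphi : psi @* S \subset phi @* Gh by rewrite imGh imS.
pose fstE := restrm (subsetT E) (fst_morphism gT kT).
have imfstE : fstE @* E = Gh by rewrite morphim_restrm setIid pullback_fst.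
have [injf1 imf1] := schur_cover_der_injm cover perfG imfstE
  (etrans (pullback_morphim sphipsi) imGh) (ker_pullback_center kerGh kerS).
have invmP g : g \in Gh -> invm injf1 g \in E^`(1) /\ (invm injf1 g).1 = g.
  move=> Gg; rewrite -imf1 in Gg; split; last exact: (invmK injf1 Gg).
  by have := mem_morphim (invm injf1) Gg Gg; rewrite morphim_invm.
have rhoM : {in Gh &, {morph (fun g => (invm injf1 g).2) : g h / g * h}}.
  by move=> g h Gg Hh; rewrite /= morphM // imf1.
exists (Morphism rhoM); split=> [|g Gg]; last first.
  have [/(subsetP (der_sub 1 E))] := invmP g Gg.
  by rewrite pullbackE => /and3P[_ _ /eqP <-] ->.
rewrite -[RHS]perfS -(pullback_snd spsiphi) -morphim_der ?subsetT //.
apply/eqP; rewrite eqEsubset; apply/andP; split; apply/subsetP.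
  move=> _ /morphimP[g _ Gg ->]; have [E1g _] := invmP g Gg.
  exact: mem_morphim (in_setT _) E1g.
move=> _ /morphimP[e _ E'e ->]; have Ge1 : e.1 \in Gh.
  by rewrite -imf1; apply/morphimP; exists e; rewrite ?(subsetP (der_sub 1 E) _ E'e).
by apply/morphimP; exists e.1 => //=; rewrite (invmE injf1 E'e).
Qed.

Local Open Scope ring_scope.

Section MonomialWith.

Variables (R : idomainType) (n : nat).
Implicit Types (P Q A : 'M[R]_n) (s t : {perm 'I_n}).

Definition monomial_with P s := forall i j, (P i j != 0) = (j == s i).

Lemma monomial_with0 P s i j : monomial_with P s -> j != s i -> P i j = 0.
Proof. by move=> Ps; rewrite -Ps => /negPn/eqP. Qed.

Lemma mulmx_monomial_with P A s i j :
  monomial_with P s -> (P *m A) i j = P i (s i) * A (s i) j.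
Proof.
move=> Ps; rewrite mxE (bigD1 (s i)) //= big1 ?addr0 // => k nk.
by rewrite (monomial_with0 Ps nk) mul0r.
Qed.

Lemma monomial_with1 : monomial_with 1%:M 1.
Proof.
by move=> i j; rewrite mxE perm1 [j == i]eq_sym; case: (i == j); rewrite /= ?oner_eq0 ?eqxx.
Qed.

Lemma monomial_withM P Q s t :
  monomial_with P s -> monomial_with Q t -> monomial_with (P *m Q) (s * t).
Proof.
move=> Ps Qt i j; rewrite (mulmx_monomial_with _ _ _ Ps) permM mulf_eq0 negb_or Qt.
by have -> : P i (s i) != 0 by rewrite Ps.
Qed.

Lemma det_monomial_with P s :
  monomial_with P s -> \det P = (-1) ^+ s * \prod_i P i (s i).
Proof.
move=> Ps; rewrite /determinant (bigD1 s) //= [X in _ + X]big1 ?addr0 // => t nts.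
have [i nti] : exists i, t i != s i.
  apply/existsP; apply: contraR nts => /existsPn ts.
  by apply/eqP/permP => i; apply/eqP/negPn.
by rewrite (bigD1 i) //= (monomial_with0 Ps nti) mul0r mulr0.
Qed.

(* junk value 1 when P has no underlying permutation *)
Definition mxperm P : {perm 'I_n} :=
  odflt 1%g [pick s : {perm 'I_n} | [forall i, P i (s i) != 0]].

Lemma mxpermE P s : monomial_with P s -> mxperm P = s.
Proof.
move=> Ps; rewrite /mxperm; case: pickP => [t /forallP Pt | /(_ s)/forallP[] i].
  by apply/permP => i; apply/eqP; rewrite -Ps.
by rewrite Ps.
Qed.

End MonomialWith.

Lemma monomialP n (P : 'M[algC]_n) : monomial P <-> exists s, monomial_with P s.
Proof.
split=> [/andP[/forallP rows /forallP cols] | [s Ps]]; last first.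
  apply/andP; split; apply/forallP => i; apply/card1P.
    by exists (s i) => j; rewrite !inE Ps.
  by exists ((s^-1)%g i) => j; rewrite !inE Ps; apply/eqP/eqP => ->; rewrite ?permKV ?permK.
have /fin_all_exists[f Pf] i : exists j, forall k, (P i k != 0) = (k == j).
  by have /card1P[j Pij] := rows i; exists j => k; have := Pij k; rewrite !inE.
suff f_inj : injective f by exists (perm f_inj) => i j; rewrite permE.
move=> i i' fii'; have /card1P[k Pk] := cols (f i).
have col_k i1 : (P i1 (f i) != 0) = (i1 == k) by have := Pk i1; rewrite !inE.
have := col_k i; have := col_k i'; rewrite !Pf fii' eqxx.
by move=> /esym/eqP-> /esym/eqP->.
Qed.

Lemma monomial_with_underlying n (P : 'M[algC]_n) s :
  monomial_with P s -> underlying_perm P s.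
Proof. by move=> Ps i; rewrite Ps. Qed.

Lemma monomial_with_underlying_eq n (P : 'M[algC]_n) s t :
  monomial_with P s -> underlying_perm P t -> s = t.
Proof. by move=> Ps Pt; apply/permP => i; apply/esym/eqP; rewrite -Ps Pt. Qed.

Section CayleyEmbedding.

Variables (R : comUnitRingType) (n : nat) (l : seq 'M[R]_n).
Hypotheses (l1 : 1%:M \in l) (lM : {in l &, forall A B, A *m B \in l}).
Hypothesis l_unit : {subset l <= unitmx}.
Implicit Types (A B : 'M[R]_n) (p q : {perm seq_sub l}).

Definition cayley_fun A : {ffun seq_sub l -> seq_sub l} :=
  [ffun k => insubd k (val k *m A)].

(* junk value 1 unless k |-> k A is injective on l *)
Definition cayley_perm A : {perm seq_sub l} :=
  insubd (1%g : {perm seq_sub l}) (cayley_fun A).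

Definition cayley_mx p : 'M[R]_n := val (p (SeqSub l1)).

Lemma cayley_permE A k : A \in l -> val (cayley_perm A k) = val k *m A.
Proof.
move=> lA; have cayleyE k' : val (cayley_fun A k') = val k' *m A.
  by rewrite ffunE val_insubd lM ?(valP k').
have cayley_inj : injectiveb (cayley_fun A).
  apply/injectiveP => k1 k2 /(congr1 val); rewrite !cayleyE.
  by move/(canLR (mulmxK (l_unit lA))); rewrite mulmxK ?l_unit // => /val_inj.
by rewrite -cayleyE /cayley_perm -pvalE insubdK.
Qed.

Lemma cayley_permK : {in l, cancel cayley_perm cayley_mx}.
Proof. by move=> A lA; rewrite /cayley_mx cayley_permE ?mul1mx. Qed.

Lemma cayley_permM A B : A \in l -> B \in l ->
  cayley_perm (A *m B) = (cayley_perm A * cayley_perm B)%g.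
Proof.
move=> lA lB; apply/permP => k; apply: val_inj.
by rewrite permM !cayley_permE ?lM ?mulmxA.
Qed.

Lemma cayley_perm1 : cayley_perm 1%:M = 1%g.
Proof. by apply/permP => k; apply: val_inj; rewrite perm1 cayley_permE ?mulmx1. Qed.

Lemma invmx_mem A : A \in l -> invmx A \in l.
Proof.
move=> lA; set k := (cayley_perm A)^-1%g (SeqSub l1).
have : val k *m A = 1%:M by rewrite -cayley_permE // permKV.
by move/(canRL (mulmxK (l_unit lA))); rewrite mul1mx => <-; apply: valP.
Qed.

Lemma cayley_permV A : A \in l -> cayley_perm (invmx A) = (cayley_perm A)^-1%g.
Proof.
move=> lA; apply/eqP; rewrite eq_sym eq_invg_mul -cayley_permM ?invmx_mem //.
by rewrite mulmxV ?l_unit // cayley_perm1.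
Qed.

Lemma cayley_perm_commg A B : A \in l -> B \in l ->
  cayley_perm (invmx A *m invmx B *m A *m B) = [~ cayley_perm A, cayley_perm B].
Proof.
move=> lA lB; rewrite !cayley_permM ?lM ?invmx_mem // !cayley_permV //.
by rewrite /commg /conjg !mulgA.
Qed.

Definition cayley_set : {set {perm seq_sub l}} := [set cayley_perm (val k) | k : seq_sub l].

Lemma cayley_setP p : reflect (exists2 A, A \in l & p = cayley_perm A) (p \in cayley_set).
Proof.
apply: (iffP imsetP) => [[k _ ->] | [A lA ->]]; first by exists (val k); rewrite ?(valP k).
by exists (SeqSub lA).
Qed.

Lemma cayley_group_set : group_set cayley_set.
Proof.
apply/group_setP; split; first by apply/cayley_setP; exists 1%:M; rewrite ?cayley_perm1.
move=> _ _ /cayley_setP[A lA ->] /cayley_setP[B lB ->].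
by apply/cayley_setP; exists (A *m B); rewrite ?lM ?cayley_permM.
Qed.

Canonical cayley_group := Group cayley_group_set.

Lemma cayley_mx_mem p : p \in cayley_set -> cayley_mx p \in l.
Proof. by case/cayley_setP=> A lA ->; rewrite cayley_permK. Qed.

Lemma cayley_mxK : {in cayley_set, cancel cayley_mx cayley_perm}.
Proof. by move=> _ /cayley_setP[A lA ->]; rewrite cayley_permK. Qed.

Lemma cayley_mxM : {in cayley_set &, {morph cayley_mx : p q / (p * q)%g >-> p *m q}}.
Proof.
move=> _ _ /cayley_setP[A lA ->] /cayley_setP[B lB ->].
by rewrite -cayley_permM ?cayley_permK ?lM.
Qed.

End CayleyEmbedding.

Lemma seq_of_covered (T : eqType) (P : T -> Prop) (s : seq T) :
  (forall x, P x -> x \in s) -> exists s' : seq T, forall x, P x <-> x \in s'.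
Proof.
elim: s P => [|y s IHs] P sPs; first by exists [::] => x; split=> // /sPs.
have [s' Ps'] : exists s' : seq T, forall x, P x /\ x != y <-> x \in s'.
  by apply: IHs => x [/sPs]; rewrite inE => /orP[/eqP-> /eqP|].
case: (classic (P y)) => [Py | nPy]; [exists (y :: s') | exists s'] => x.
  rewrite inE; split=> [Px | /orP[/eqP-> // | /Ps'[] //]].
  by have [//|nxy] := eqVneq x y; apply/orP; right; apply/Ps'.
split=> [Px | /Ps'[] //]; apply/Ps'; split=> //.
by apply/eqP=> exy; apply: nPy; rewrite -exy.
Qed.

Lemma conjC_norm1 (z : algC) : `|z| = 1 -> z^* = z^-1.
Proof. by move=> z1; rewrite invC_norm z1 expr1n invr1 mul1r. Qed.

Section ConjugateTranspose.

Variable n : nat.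
Implicit Types (A B P : 'M[algC]_n).

Lemma ctrmxM A B : ctrmx (A *m B) = ctrmx B *m ctrmx A.
Proof. by rewrite /ctrmx map_mxM trmx_mul. Qed.

Lemma ctrmx1 : ctrmx (1%:M : 'M[algC]_n) = 1%:M.
Proof. by rewrite /ctrmx map_mx1 trmx1. Qed.

Lemma ctrmxZ a A : ctrmx (a *: A) = a^* *: ctrmx A.
Proof. by apply/matrixP=> i j; rewrite /ctrmx !mxE rmorphM. Qed.

Lemma mulmx_ctrmx_monomial_with A P s i j :
  monomial_with P s -> (A *m ctrmx P) i j = A i (s j) * (P j (s j))^*.
Proof.
move=> Ps; rewrite mxE (bigD1 (s j)) //= big1 ?addr0 ?mxE // => k nk.
by rewrite !mxE (monomial_with0 Ps nk) conjC0 mulr0.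
Qed.

End ConjugateTranspose.

Section Gamma.

Variables (n : nat) (M : 'M[algC]_n).
Implicit Types (P Q L : 'M[algC]_n).

Lemma Gamma1 : Gamma M 1%:M.
Proof.
split; last by rewrite mul1mx ctrmx1 mulmx1.
by apply/monomialP; exists 1%g; apply: monomial_with1.
Qed.

Lemma GammaM P Q : Gamma M P -> Gamma M Q -> Gamma M (P *m Q).
Proof.
move=> [/monomialP[s Ps] MP] [/monomialP[t Qt] MQ]; split.
  by apply/monomialP; exists (s * t)%g; apply: monomial_withM.
by rewrite ctrmxM !mulmxA -(mulmxA P Q) -(mulmxA P) MQ MP.
Qed.

Lemma Gamma_f1 : Gamma_f M 1%:M.
Proof. by split; [apply: Gamma1 | apply: det1]. Qed.

Lemma Gamma_fM L L' : Gamma_f M L -> Gamma_f M L' -> Gamma_f M (L *m L').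
Proof.
by move=> [GL dL] [GL' dL']; split; [apply: GammaM | rewrite det_mulmx dL dL' mulr1].
Qed.

Lemma Gamma_f_unitmx L : Gamma_f M L -> L \in unitmx.
Proof. by move=> [_ dL]; rewrite unitmxE dL unitr1. Qed.

Lemma Gamma_entry P s i j : Gamma M P -> monomial_with P s ->
  P i (s i) * M (s i) (s j) * (P j (s j))^* = M i j.
Proof.
move=> [_ MP] Ps; rewrite -{2}MP (mulmx_ctrmx_monomial_with _ _ _ Ps).
by rewrite (mulmx_monomial_with _ _ _ Ps).
Qed.

Hypothesis M_unimodular : forall i j, `|M i j| = 1.

Lemma Gamma_norm P s i : Gamma M P -> monomial_with P s -> `|P i (s i)| = 1.
Proof.
move=> GP Ps; have /(congr1 Num.norm) := Gamma_entry i i GP Ps.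
rewrite !normrM !M_unimodular mulr1 norm_conjC => /eqP.
by rewrite -expr2 (@pexpr_eq1 _ _ 2) // => /eqP.
Qed.

Hypothesis n_gt0 : (0 < n)%N.

Lemma Gamma_perm_scale P Q s : Gamma M P -> Gamma M Q ->
  monomial_with P s -> monomial_with Q s -> exists c, Q = c *: P.
Proof.
move=> GP GQ Ps Qs; pose i0 := Ordinal n_gt0.
exists (Q i0 (s i0) / P i0 (s i0)); apply/matrixP => j k; rewrite mxE.
have [->|nk] := eqVneq k (s j); last first.
  by rewrite (monomial_with0 Ps nk) (monomial_with0 Qs nk) mulr0.
have norm_nz (z : algC) : `|z| = 1 -> z != 0 by move=> z1; rewrite -normr_eq0 z1 oner_eq0.
have Pnz i : P i (s i) != 0 by apply/norm_nz/(Gamma_norm i GP Ps).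
have Qnz i : Q i (s i) != 0 by apply/norm_nz/(Gamma_norm i GQ Qs).
have Mnz : M (s i0) (s j) != 0 by apply: norm_nz.
have := Gamma_entry i0 j GQ Qs; rewrite -(Gamma_entry i0 j GP Ps).
rewrite !conjC_norm1 ?(Gamma_norm j GP Ps) ?(Gamma_norm j GQ Qs) // => e.
rewrite -[LHS](@divKf _ (Q i0 (s i0) * M (s i0) (s j))) ?mulf_neq0 // e.
by field; rewrite Pnz Mnz Pnz.
Qed.

Lemma Gamma_scalar P : Gamma M P -> monomial_with P 1 -> exists c, P = c%:M.
Proof.
move=> GP P1; have [c ->] := Gamma_perm_scale Gamma1 GP (@monomial_with1 _ n) P1.
by exists c; rewrite scalemx1.
Qed.

Lemma Gamma_f_lift P s : Gamma M P -> monomial_with P s ->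
  exists L, Gamma_f M L /\ monomial_with L s.
Proof.
move=> [monoP MP] Ps.
have detP1 : `|\det P| = 1.
  rewrite (det_monomial_with Ps) normrM normrX normrN1 expr1n mul1r normr_prod.
  by rewrite big1 // => i _; apply: (Gamma_norm i (conj monoP MP) Ps).
pose c := n.-root (\det P)^-1.
have cn : c ^+ n = (\det P)^-1 by rewrite rootCK.
have c1 : `|c| = 1.
  by apply/eqP; rewrite -(@pexpr_eq1 _ _ n) -?normrX ?cn ?normfV ?detP1 ?invr1 -?lt0n.
have cP : monomial_with (c *: P) s.
  by move=> i j; rewrite mxE mulf_eq0 negb_or -normr_eq0 c1 oner_eq0 Ps.
exists (c *: P); split=> //; split.
  split; first by apply/monomialP; exists s.
  by rewrite ctrmxZ -scalemxAl -scalemxAr -scalemxAl MP scalerA -normCKC c1 expr1n scale1r.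
by rewrite detZ cn mulVf // -normr_eq0 detP1 oner_eq0.
Qed.

Lemma Gamma_f_perm_finite s :
  exists r : seq 'M_n, forall L, Gamma_f M L -> monomial_with L s -> L \in r.
Proof.
have [[L0 [GL0 L0s]] | none] :=
  classic (exists L0, Gamma_f M L0 /\ monomial_with L0 s); last first.
  by exists [::] => L GL Ls; case: none; exists L.
have [z zP] := C_prim_root_exists n_gt0.
exists [seq z ^+ k *: L0 | k <- iota 0 n] => L GL Ls.
have [c eL] := Gamma_perm_scale GL0.1 GL.1 L0s Ls.
have cn : c ^+ n = 1 by have := GL.2; rewrite eL detZ GL0.2 mulr1.
have [k ek] := prim_rootP zP cn.
by apply/mapP; exists (val k); rewrite ?mem_iota ?ltn_ord // eL ek.
Qed.

Lemma Gamma_f_finite : exists l : seq 'M_n, forall L, Gamma_f M L <-> L \in l.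
Proof.
have /fin_all_exists[r rP] := Gamma_f_perm_finite.
apply: (@seq_of_covered _ _ (flatten [seq r s | s <- enum {perm 'I_n}])) => L GL.
have [s Ls] := (monomialP L).1 GL.1.1.
by apply/flatten_mapP; exists s; [rewrite mem_enum | apply: rP].
Qed.

End Gamma.

Section GammaCayley.

Variables (n : nat) (M : 'M[algC]_n) (l : seq 'M[algC]_n).
Hypotheses (M_unimodular : forall i j, `|M i j| = 1) (n_gt0 : (0 < n)%N).
Hypothesis Gamma_fE : forall L, Gamma_f M L <-> L \in l.

Let l1 : 1%:M \in l := (Gamma_fE _).1 (Gamma_f1 M).

Let lM : {in l &, forall A B, A *m B \in l}.
Proof. by move=> A B /Gamma_fE GA /Gamma_fE GB; apply/Gamma_fE/Gamma_fM. Qed.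

Let l_unit : {subset l <= unitmx}.
Proof. by move=> A /Gamma_fE/Gamma_f_unitmx. Qed.

Local Notation S := (cayley_group l1 lM l_unit).
Local Notation Lmx := (cayley_mx l1).

Lemma cayley_mx_monomial p : p \in S -> monomial_with (Lmx p) (mxperm (Lmx p)).
Proof.
move=> Sp; have [[/monomialP[s Ls] _] _] := (Gamma_fE _).2 (cayley_mx_mem l1 lM l_unit Sp).
by rewrite (mxpermE Ls).
Qed.

Lemma Gamma_perm_morphM : {in S &, {morph (fun p => mxperm (Lmx p)) : p q / (p * q)%g}}.
Proof.
move=> p q Sp Sq /=; rewrite cayley_mxM //.
exact/mxpermE/monomial_withM/cayley_mx_monomial/Sq/cayley_mx_monomial.
Qed.

Definition Gamma_perm_morphism := Morphism Gamma_perm_morphM.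

Lemma ker_Gamma_perm_center : 'ker Gamma_perm_morphism \subset 'Z(S).
Proof.
apply/subsetP => p /morphpreP[Sp /set1P /= Lp1].
have := cayley_mx_monomial Sp; rewrite Lp1.
have /Gamma_fE[GLp _] := cayley_mx_mem l1 lM l_unit Sp.
case/(Gamma_scalar M_unimodular n_gt0 GLp) => c Lpc.
rewrite inE Sp; apply/centP => q Sq.
rewrite -(cayley_mxK l1 lM l_unit Sp) -(cayley_mxK l1 lM l_unit Sq).
rewrite /commute -!(cayley_permM lM l_unit) ?(cayley_mx_mem l1 lM l_unit) //.
by rewrite Lpc scalar_mxC.
Qed.

Lemma Gamma_perm_morphim (G : {group {perm 'I_n}}) :
  (forall s, s \in G <-> exists P, Gamma M P /\ underlying_perm P s) ->
  Gamma_perm_morphism @* S = G.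
Proof.
move=> GE; apply/eqP; rewrite eqEsubset; apply/andP; split; apply/subsetP.
  move=> _ /morphimP[p _ Sp ->]; apply/GE; exists (Lmx p); split.
    by have /Gamma_fE[] := cayley_mx_mem l1 lM l_unit Sp.
  exact/monomial_with_underlying/cayley_mx_monomial.
move=> s /GE[P [GP Ps]]; have [t Pt] := (monomialP P).1 GP.1.
rewrite -(monomial_with_underlying_eq Pt Ps).
have [L [/Gamma_fE lL Ls]] := Gamma_f_lift M_unimodular n_gt0 GP Pt.
have SL : cayley_perm l L \in S by apply/cayley_setP; exists L.
by apply/morphimP; exists (cayley_perm l L) => //=; rewrite cayley_permK ?(mxpermE Ls).
Qed.

Lemma cayley_group_perfect : perfect_mx (Gamma_f M) -> perfect_group S.
Proof.
move=> perfGf; apply/eqP; rewrite eqEsubset der_sub /=.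
apply/subsetP => _ /cayley_setP[L lL ->].
have [cs [csP ->]] := perfGf L ((Gamma_fE L).2 lL).
suff [] : foldr (fun p acc => mxcomm p.1 p.2 *m acc) 1%:M cs \in l /\
  cayley_perm l (foldr (fun p acc => mxcomm p.1 p.2 *m acc) 1%:M cs) \in S^`(1)%g by [].
elim: cs csP => [|[A B] cs IHcs] csP /=.
  by rewrite (cayley_perm1 l1 lM l_unit) group1.
have [/Gamma_fE lA /Gamma_fE lB] := csP _ (mem_head _ _).
have [p csp|lcs Scs] := IHcs; first by apply: csP; rewrite inE csp orbT.
have lAB : mxcomm A B \in l by rewrite !lM ?(invmx_mem l1 lM l_unit).
split; first exact: lM.
rewrite (cayley_permM lM l_unit) // groupM // /mxcomm (cayley_perm_commg l1 lM l_unit) //.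
rewrite mem_commg //.
  by apply/cayley_setP; exists A.
by apply/cayley_setP; exists B.
Qed.

Lemma Gamma_f_repr (G : {group {perm 'I_n}}) (gT : finGroupType) (Gh : {group gT})
    (phi : {morphism Gh >-> {perm 'I_n}}) :
  (forall s, s \in G <-> exists P, Gamma M P /\ underlying_perm P s) ->
  perfect_group G -> perfect_mx (Gamma_f M) -> schur_cover phi G ->
  exists rho : mx_representation algC Gh n,
    (forall L, Gamma_f M L <-> exists2 g, g \in Gh & L = rho g) /\
    {in Gh, forall g, monomial_with (rho g) (phi g)}.
Proof.
move=> GE perfG perfGf cover.
have [rho [imrho rhoP]] := schur_cover_lift cover perfG (cayley_group_perfect perfGf)
  (Gamma_perm_morphim GE) ker_Gamma_perm_center.
have Srho g : g \in Gh -> rho g \in S by move=> Gg; rewrite -imrho mem_morphim.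
have rho_repr : mx_repr Gh (fun g => Lmx (rho g)).
  split=> [|g h Gg Gh'] /=; first by rewrite morph1 /cayley_mx perm1.
  by rewrite morphM // (cayley_mxM l1 lM l_unit) ?Srho.
exists (MxRepresentation rho_repr); split=> [L | g Gg] /=; last first.
  by rewrite -(rhoP g Gg); apply: cayley_mx_monomial; apply: Srho.
split=> [/Gamma_fE lL | [g Gg ->]]; last exact/Gamma_fE/(cayley_mx_mem l1 lM l_unit)/Srho.
have : cayley_perm l L \in rho @* Gh by rewrite imrho; apply/cayley_setP; exists L.
by case/morphimP=> g _ Gg eL; exists g; rewrite // -eL cayley_permK.
Qed.

End GammaCayley.

Section MonomialInduced.

Variables (n : nat) (G : {group {perm 'I_n}}) (gT : finGroupType) (Gh : {group gT}).
Variables (phi : {morphism Gh >-> {perm 'I_n}}) (x : 'I_n).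
Variable rho : mx_representation algC Gh n.
Hypotheses (imGh : phi @* Gh = G) (trG : [transitive G, on [set: 'I_n] | 'P]).
Hypothesis rho_monomial : {in Gh, forall g, monomial_with (rho g) (phi g)}.

Local Notation Hh := (phi @*^-1 'C_G[x | 'P])%G.

Lemma stab_preimE h : h \in Gh -> (h \in Hh) = (phi h x == x).
Proof. by move=> Gh0; rewrite !inE Gh0 /= sub1set !inE apermE -imGh mem_morphim. Qed.

Lemma sub_stab_preim : Hh \subset Gh.
Proof. exact: subsetIl. Qed.

Lemma stab_repr : mx_repr Hh (fun h => (rho h x x)%:M : 'M[algC]_1).
Proof.
split=> [|h h' Hh1 Hh2]; first by rewrite repr_mx1 mxE eqxx.
have [Gh1 Gh2] := (subsetP sub_stab_preim _ Hh1, subsetP sub_stab_preim _ Hh2).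
rewrite repr_mxM // (mulmx_monomial_with _ _ _ (rho_monomial Gh1)).
by move: Hh1; rewrite stab_preimE // => /eqP->; rewrite scalar_mxM.
Qed.

Definition stab_char := cfRepr (MxRepresentation stab_repr).

Lemma stab_char_linear : stab_char \is a linear_char.
Proof. by rewrite qualifE /= /stab_char cfRepr_char cfRepr1; apply/eqP. Qed.

Lemma stab_charE h : h \in Hh -> stab_char h = rho h x x.
Proof. by move=> Hh0; rewrite cfunE Hh0 mulr1n mxtrace_scalar. Qed.

Definition transversal i : gT := odflt 1%g [pick g in Gh | phi g i == x].

Lemma transversalP i : transversal i \in Gh /\ phi (transversal i) i = x.
Proof.
rewrite /transversal; case: pickP => [g /andP[Gg /eqP] // | none].
have [s + eg] := atransP2 trG (in_setT i) (in_setT x).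
rewrite -imGh => /morphimP[g _ Gg esg].
by have := none g; rewrite Gg eg esg /= eqxx.
Qed.

Lemma transversalV_x i : phi (transversal i)^-1%g x = i.
Proof. by have [Gt <-] := transversalP i; rewrite morphV // permK. Qed.

Lemma transversal_left : left_transversal Gh Hh transversal.
Proof.
split; first by move=> i; case: (transversalP i).
split=> [i j | g Gg].
  have [[Gi _] [Gj tj]] := (transversalP i, transversalP j).
  rewrite stab_preimE ?groupM ?groupV // morphM ?groupV // permM transversalV_x.
  by rewrite -tj => /eqP/perm_inj.
exists ((phi g)^-1%g x); have [Gi _] := transversalP ((phi g)^-1%g x).
by rewrite stab_preimE ?groupM ?groupV // morphM ?groupV // permM transversalV_x permKV.
Qed.

Lemma transversal_conj_stab i j g : g \in Gh ->
  phi ((transversal i)^-1 * g * transversal j)%g x = phi (transversal j) (phi g i).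
Proof.
have [[Gi _] [Gj _]] := (transversalP i, transversalP j).
by move=> Gg; rewrite !morphM ?groupM ?groupV // !permM transversalV_x.
Qed.

Local Notation a i := (rho (transversal i)^-1%g x i).

Lemma transversal_entry_nz i : a i != 0.
Proof.
by have [Gi _] := transversalP i; rewrite (rho_monomial (groupVr Gi)) transversalV_x.
Qed.

Lemma transversal_entryK j : a j * rho (transversal j) j x = 1.
Proof.
have [Gj _] := transversalP j.
have := congr1 (fun A : 'M_n => A x x) (repr_mxM rho (groupVr Gj) Gj).
rewrite mulVg repr_mx1 mxE eqxx (mulmx_monomial_with _ _ _ (rho_monomial (groupVr Gj))).
by rewrite transversalV_x => <-.
Qed.

Definition transversal_diag : 'M[algC]_n := diag_mx (\row_i a i).

Lemma transversal_diag_unit : transversal_diag \in unitmx.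
Proof.
rewrite unitmxE det_diag unitfE; apply/prodf_neq0 => i _.
by rewrite mxE transversal_entry_nz.
Qed.

Lemma transversal_diag_intertwines g : g \in Gh ->
  transversal_diag *m rho g = induced_mx stab_char transversal g *m transversal_diag.
Proof.
move=> Gg; apply/matrixP => i j; rewrite mul_diag_mx mul_mx_diag !mxE.
have [[Gi _] [Gj tj]] := (transversalP i, transversalP j).
set h := ((transversal i)^-1 * g * transversal j)%g.
have Gh0 : h \in Gh by rewrite !groupM ?groupV.
have phih : phi h x = phi (transversal j) (phi g i) by apply: transversal_conj_stab.
have [Hh0 | nHh0] := boolP (h \in Hh).
  have gij : phi g i = j by move: Hh0; rewrite stab_preimE // phih -tj => /eqP/perm_inj.
  rewrite stab_charE // !repr_mxM ?groupM ?groupV //.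
  rewrite -mulmxA !(mulmx_monomial_with _ _ _ (rho_monomial _)) ?groupV //.
  rewrite transversalV_x gij.
  by rewrite -!mulrA [rho _ j x * _]mulrC transversal_entryK mulr1.
rewrite cfun0 // mul0r; apply/eqP; rewrite mulf_eq0 (negbTE (transversal_entry_nz i)) /=.
apply: contraNT nHh0; rewrite (rho_monomial Gg) stab_preimE // phih => /eqP <-.
by rewrite tj.
Qed.

Lemma monomial_repr_induced : induced_from_linear_char Hh rho.
Proof.
exists stab_char, transversal, transversal_diag.
split; first exact: stab_char_linear.
split; first exact: transversal_left.
split=> [|g Gg]; first exact: transversal_diag_unit.
by rewrite -mulmxA -transversal_diag_intertwines // mulKmx ?transversal_diag_unit.
Qed.

End MonomialInduced.

Unset Implicit Arguments.

Theorem proposition6p2 (n : nat) (M : 'M[algC]_n)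
  (G : {group {perm 'I_n}})
  (gT : finGroupType) (Gh : {group gT}) (phi : {morphism Gh >-> {perm 'I_n}})
  (x : 'I_n) :
  complex_hadamard M ->
  (forall s : {perm 'I_n}, s \in G <-> exists P, Gamma M P /\ underlying_perm P s) ->
  [transitive G, on [set: 'I_n] | 'P] ->
  perfect_group G ->
  perfect_mx (Gamma_f M) ->
  schur_cover phi G ->
  exists rho : mx_representation algC Gh n,
    (forall L, Gamma_f M L <-> exists2 g, g \in Gh & L = rho g) /\
    induced_from_linear_char (phi @*^-1 'C_G[x | 'P])%G rho.
Proof.
move=> [M_unimodular _] GE trG perfG perfGf cover.
have n_gt0 : (0 < n)%N := leq_ltn_trans (leq0n x) (ltn_ord x).
have [l Gamma_fE] := Gamma_f_finite M_unimodular n_gt0.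
have [rho [Gamma_f_im rho_monomial]] :=
  Gamma_f_repr M_unimodular n_gt0 Gamma_fE GE perfG perfGf cover.
have [[imGh _] _] := cover.
exists rho; split=> //; exact: monomial_repr_induced imGh trG rho_monomial.
Qed.
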